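(* Let $\Lambda\to\Lambda_1\to\Lambda_2$ be local homomorphisms of local rings such that $\Lambda_1\to\Lambda_2$ induces a finite extension of residue fields. If $\Lambda\to\Lambda_2$ is slightly ramified, then so is $\Lambda\to\Lambda_1$.
   Context: For a local ring $(R,\mathfrak m_R)$, $\hat\Gamma(R,\mathfrak m_R)$ is the inverse limit of the system of finite-length local $R$-algebras with a divided power structure on their maximal ideal (transition maps divided power homomorphisms). A local homomorphism $\Lambda\to\Lambda'$ is slightly ramified if the composite $\Lambda\to\hat\Gamma(\Lambda',\mathfrak m_{\Lambda'})$ is injective. *)

From HB Require Import structures.
From mathcomp Require Import all_boot all_order all_algebra.
Set Implicit Arguments. Unset Strict Implicit. Unset Printing Implicit Defensive.
Import GRing.Theory.
Local Open Scope ring_scope.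

Definition ideal (A : comUnitRingType) (I : A -> Prop) : Prop :=
  I 0 /\ (forall x y, I x -> I y -> I (x + y)) /\ (forall a x, I x -> I (a * x)).

Definition maximal_ideal (A : comUnitRingType) (I : A -> Prop) : Prop :=
  ideal I /\ ~ I 1 /\
  forall J : A -> Prop, ideal J -> (forall x, I x -> J x) -> ~ J 1 ->
    forall x, J x -> I x.

Definition local_ring (A : comUnitRingType) : Prop :=
  exists I : A -> Prop, maximal_ideal I /\
    forall J, maximal_ideal J -> forall x, J x <-> I x.

Definition max_ideal (A : comUnitRingType) (x : A) : Prop :=
  exists I : A -> Prop, maximal_ideal I /\ I x.

Definition local_hom (A B : comUnitRingType) (f : A -> B) : Prop :=
  forall x, max_ideal x -> max_ideal (f x).

(** Finite length of an R-algebra A (structure map f) as an R-module: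
    lengths of strictly increasing chains of R-submodules are bounded. *)
Definition submodule (R A : comUnitRingType) (f : {rmorphism R -> A})
  (M : A -> Prop) : Prop :=
  M 0 /\ (forall x y, M x -> M y -> M (x + y)) /\
  (forall r x, M x -> M (f r * x)).

Definition finite_length_over (R A : comUnitRingType) (f : {rmorphism R -> A}) : Prop :=
  exists N : nat, forall (k : nat) (M : nat -> A -> Prop),
    (forall i, (i <= k)%N -> submodule f (M i)) ->
    (forall i, (i < k)%N ->
       (forall x, M i x -> M i.+1 x) /\ exists x, M i.+1 x /\ ~ M i x) ->
    (k <= N)%N.

Definition pd_structure (A : comUnitRingType) (I : A -> Prop)
  (g : nat -> A -> A) : Prop :=
  ideal I /\
  (forall x, I x -> g 0%N x = 1) /\
  (forall x, I x -> g 1%N x = x) /\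
  (forall n x, I x -> (0 < n)%N -> I (g n x)) /\
  (forall n a x, I x -> g n (a * x) = a ^+ n * g n x) /\
  (forall n x y, I x -> I y ->
     g n (x + y) = \sum_(i < n.+1) g i x * g (n - i)%N y) /\
  (forall m n x, I x -> g m x * g n x = 'C(m + n, m)%:R * g (m + n)%N x) /\
  (forall m n x, I x -> (0 < m)%N ->
     g n (g m x) = ((m * n)`! %/ (n`! * (m`!) ^ n))%:R * g (m * n)%N x).

(** Objects of the system defining \hat\Gamma(R, m_R): finite-length local
    R-algebras with a divided power structure on their maximal ideal. *)
Record pdobj (R : comUnitRingType) := PDObj {
  pd_car : comUnitRingType;
  pd_alg : {rmorphism R -> pd_car};
  pd_gam : nat -> pd_car -> pd_car;
  pd_local : local_ring pd_car;
  pd_alg_local : local_hom pd_alg;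
  pd_length : finite_length_over pd_alg;
  pd_struct : pd_structure (@max_ideal pd_car) pd_gam }.

Record pdmor (R : comUnitRingType) (X Y : pdobj R) := PDMor {
  pm_fun : {rmorphism pd_car X -> pd_car Y};
  pm_alg : forall r, pm_fun (@pd_alg R X r) = @pd_alg R Y r;
  pm_ideal : forall x, max_ideal x -> max_ideal (pm_fun x);
  pm_gam : forall n x, max_ideal x ->
     pm_fun (@pd_gam R X n x) = @pd_gam R Y n (pm_fun x) }.

(** The inverse limit \hat\Gamma(R, m_R) (as compatible families) and the
    canonical map R -> \hat\Gamma(R, m_R). *)
Definition gamma_hat (R : comUnitRingType) :=
  { a : forall X : pdobj R, pd_car X |
    forall (X Y : pdobj R) (h : pdmor X Y), @pm_fun R X Y h (a X) = a Y }.

Definition to_gamma_hat (R : comUnitRingType) (r : R) : gamma_hat R :=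
  @exist _ (fun a : forall X : pdobj R, pd_car X => forall (X Y : pdobj R) (h : pdmor X Y), @pm_fun R X Y h (a X) = a Y) (fun X => @pd_alg R X r) (fun X Y h => @pm_alg R X Y h r).

Definition slightly_ramified (L L' : comUnitRingType) (f : L -> L') : Prop :=
  injective (fun x => to_gamma_hat (f x)).

(** Residue field extension of f : L1 -> L2 is finite: finitely many
    elements of L2 span L2/m2 over L1/m1. *)
Definition finite_residue_ext (L1 L2 : comUnitRingType) (f : L1 -> L2) : Prop :=
  exists s : seq L2, forall y : L2, exists c : seq L1,
    max_ideal (y - \sum_(i < size s) f c`_i * s`_i).

(* Restricting scalars along [g] turns every object of the system defining
   \hat\Gamma(L2) into an object of the system defining \hat\Gamma(L1): the
   divided powers are untouched, and the length over L1 stays finite because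
   a composition series M_{j+1} = M_j + L2 w_j over L2, together with
   elements s_i spanning the residue extension, gives the triangular
   L1-spanning family (s_i w_j), whose j-th block is killed by m_1 modulo the
   earlier ones.  Two elements of L1 coming from L with the same image in
   \hat\Gamma(L1) therefore have the same image in \hat\Gamma(L2), and the
   injectivity of L -> \hat\Gamma(L2) concludes. *)

From mathcomp Require Import all_boot all_order all_algebra ring zify.
From Stdlib Require Import Classical ClassicalEpsilon.
From Stdlib Require Import FunctionalExtensionality ProofIrrelevance.
Set Implicit Arguments. Unset Strict Implicit. Unset Printing Implicit Defensive.
Import GRing.Theory.
Local Open Scope ring_scope.

Section LocalRing.
Variable A : comUnitRingType.

Lemma max_ideal_mull (a x : A) : max_ideal x -> max_ideal (a * x).
Proof.
by move=> [I [maxI Ix]]; exists I; split=> //; case: maxI => [[_ [_ IM]] _]; apply: IM.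
Qed.

Lemma max_ideal_mulr (a x : A) : max_ideal x -> max_ideal (x * a).
Proof. by rewrite mulrC; apply: max_ideal_mull. Qed.

Lemma not_max_ideal1 : ~ @max_ideal A 1.
Proof. by move=> [I [[_ [NI1 _]] I1]]. Qed.

Hypothesis local_A : local_ring A.

Lemma local_ring_max_idealE :
  exists I : A -> Prop, maximal_ideal I /\ forall x, max_ideal x <-> I x.
Proof.
have [I [maxI uniqI]] := local_A; exists I; split=> // x; split; last by exists I.
by move=> [J [maxJ Jx]]; apply/(uniqI J maxJ).
Qed.

Lemma max_ideal0 : @max_ideal A 0.
Proof. by have [I [maxI _]] := local_A; exists I; split=> //; case: maxI => [[]]. Qed.

Lemma max_ideal_add (x y : A) : max_ideal x -> max_ideal y -> max_ideal (x + y).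
Proof.
have [I [[[_ [ID _]] _] maxE]] := local_ring_max_idealE.
by move=> /maxE Ix /maxE Iy; apply/maxE/ID.
Qed.

(* The ideal m + qA strictly contains m, hence is the whole ring. *)
Lemma invertible_mod_max_ideal (q : A) :
  ~ max_ideal q -> exists m e, max_ideal m /\ 1 = m + e * q.
Proof.
move=> Nq; have [I [[[I0 [ID IM]] [_ maxI]] maxE]] := local_ring_max_idealE.
pose J x := exists m e, I m /\ x = m + e * q.
have idealJ : ideal J.
  split; first by exists 0, 0; rewrite mul0r addr0.
  split=> [x y [m [e [Im ->]]] [m' [e' [Im' ->]]]|a x [m [e [Im ->]]]].
    by exists (m + m'), (e + e'); split; [apply: ID | ring].
  by exists (a * m), (a * e); split; [apply: IM | ring].
have IJ x : I x -> J x by move=> Ix; exists x, 0; rewrite mul0r addr0.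
have [[m [e [Im E]]]|NJ1] := classic (J 1); first by exists m, e; rewrite maxE.
exfalso; apply/Nq/maxE/(maxI J idealJ IJ NJ1).
by exists 0, 1; rewrite mul1r add0r.
Qed.

End LocalRing.

Section Span.
Variables (R A : comUnitRingType) (c : {rmorphism R -> A}) (u : nat -> A).

Definition in_span (t : nat) (y : A) :=
  exists r : nat -> R, y = \sum_(i < t) c (r i) * u i.

Lemma in_span0 t : in_span t 0.
Proof. by exists (fun=> 0); rewrite big1 // => i _; rewrite rmorph0 mul0r. Qed.

Lemma in_spanD t x y : in_span t x -> in_span t y -> in_span t (x + y).
Proof.
move=> [r ->] [r' ->]; exists (fun i => r i + r' i).
by rewrite -big_split /=; apply: eq_bigr => i _; rewrite rmorphD mulrDl.
Qed.

Lemma in_spanZ t q y : in_span t y -> in_span t (c q * y).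
Proof.
move=> [r ->]; exists (fun i => q * r i).
by rewrite mulr_sumr; apply: eq_bigr => i _; rewrite rmorphM mulrA.
Qed.

Lemma in_spanN t y : in_span t y -> in_span t (- y).
Proof. by move=> H; rewrite -mulN1r -(rmorphN1 c); apply: in_spanZ. Qed.

Lemma in_spanS t y : in_span t.+1 y <-> exists s r, in_span t s /\ y = s + c r * u t.
Proof.
split=> [[r ->]|[s [q [[r ->] ->]]]].
  exists (\sum_(i < t) c (r i) * u i), (r t); split; first by exists r.
  by rewrite big_ord_recr.
exists (fun i => if (i < t)%N then r i else q).
rewrite big_ord_recr /= ltnn; congr (_ + _); apply: eq_bigr => i _.
by rewrite ltn_ord.
Qed.

Lemma in_span_widen t t' y : (t <= t')%N -> in_span t y -> in_span t' y.
Proof.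
move=> /subnKC <-; elim: (t' - t)%N => [|n IH]; first by rewrite addn0.
move=> Hy; rewrite addnS; apply/in_spanS; exists y, 0; split; first exact: IH.
by rewrite rmorph0 mul0r addr0.
Qed.

Lemma in_span_cat t D s (q : nat -> R) : in_span t s ->
  in_span (t + D) (s + \sum_(i < D) c (q i) * u (t + i)%N).
Proof.
move=> [r ->]; exists (fun i => if (i < t)%N then r i else q (i - t)%N).
rewrite big_split_ord /=; congr (_ + _); apply: eq_bigr => i _ /=.
  by rewrite ltn_ord.
by rewrite ltnNge leq_addr /= addKn.
Qed.

End Span.

Section TriangularSpan.
Variables (R A : comUnitRingType) (c : {rmorphism R -> A}) (u : nat -> A) (K : nat).
Hypothesis local_R : local_ring R.
Hypothesis span_full : forall y, in_span c u K y.
Hypothesis span_triangular :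
  forall t m, (t < K)%N -> max_ideal m -> in_span c u t (c m * u t).

Definition has_level (t : nat) (M : A -> Prop) :=
  exists y, M y /\ in_span c u t.+1 y /\ ~ in_span c u t y.

Definition levels (M : A -> Prop) : {set 'I_K} :=
  [set t : 'I_K | if excluded_middle_informative (has_level t M) then true else false].

Lemma in_levels t M : t \in levels M <-> has_level t M.
Proof. by rewrite inE; case: excluded_middle_informative. Qed.

Lemma levelsS (M M' : A -> Prop) :
  (forall x, M x -> M' x) -> levels M \subset levels M'.
Proof.
move=> MM'; apply/subsetP=> t /in_levels [y [My Hy]].
by apply/in_levels; exists y; split=> //; apply: MM'.
Qed.

(* Induction on the level of [y]: an element [z] of [M] of the same level has
   a unit leading coefficient modulo [max_ideal], so a multiple of [z]
   cancels the leading term of [y]. *)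
Lemma submodule_sub_of_levels (M M' : A -> Prop) :
  submodule c M -> submodule c M' -> (forall x, M x -> M' x) ->
  (forall t, (t < K)%N -> has_level t M' -> has_level t M) ->
  forall y, M' y -> M y.
Proof.
move=> [M0 [MD MZ]] [_ [M'D M'Z]] MM' levelsM y M'y.
suff: forall t, (t <= K)%N -> forall y, M' y -> in_span c u t y -> M y.
  by move/(_ K (leqnn K) y M'y (span_full y)).
clear y M'y; elim=> [|t IH] tK y M'y; first by move=> [r ->]; rewrite big_ord0.
move=> Sy; have [|Nty] := classic (in_span c u t y); first exact: IH (ltnW tK) y M'y.
have [z [Mz [Sz Ntz]]] : has_level t M by apply: levelsM => //; exists y.
move/in_spanS: Sz => [sz [q [Ssz Ez]]].
have Nq : ~ max_ideal q.
  by move=> mq; apply: Ntz; rewrite Ez; apply: in_spanD => //; apply: span_triangular.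
have [m [e [mm E1]]] := invertible_mod_max_ideal local_R Nq.
move/in_spanS: Sy => [sy [r [Ssy Ey]]].
have Ecm : c m = 1 - c e * c q by rewrite -(rmorph1 c) E1 rmorphD rmorphM addrK.
have Ed : y - c (r * e) * z = sy - c (r * e) * sz + c (r * m) * u t.
  by rewrite Ey Ez !rmorphM Ecm; ring.
have Md : M (y - c (r * e) * z).
  apply: IH; first exact: ltnW.
    by apply: M'D => //; rewrite -mulNr -rmorphN; apply/M'Z/MM'.
  rewrite Ed; apply: in_spanD; first by apply/in_spanD/in_spanN/in_spanZ.
  by apply: span_triangular => //; apply: max_ideal_mull.
by rewrite -(subrK (c (r * e) * z) y); apply: MD => //; apply: MZ.
Qed.

Lemma levels_proper (M M' : A -> Prop) :
  submodule c M -> submodule c M' -> (forall x, M x -> M' x) ->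
  (exists x, M' x /\ ~ M x) -> levels M \proper levels M'.
Proof.
move=> sM sM' MM' [x [M'x NMx]]; apply/properP; split; first exact: levelsS.
apply: NNPP => Nt; apply/NMx/(submodule_sub_of_levels sM sM' MM') => // t tK lvl.
apply: NNPP => Nlvl; apply: Nt; exists (Ordinal tK); first exact/in_levels.
by apply/negP => /in_levels.
Qed.

Lemma finite_length_of_triangular_span : finite_length_over c.
Proof.
exists K => k M subM chainM.
suff: forall i, (i <= k)%N -> (i <= #|levels (M i)|)%N.
  by move/(_ k (leqnn k)) => /leq_trans; apply; rewrite -[X in (_ <= X)%N]card_ord max_card.
elim=> [|i IH] ik //; apply: leq_ltn_trans (IH (ltnW ik)) _.
have [MM' newx] := chainM i ik.
by apply/proper_card/levels_proper => //; apply: subM => //; apply: ltnW.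
Qed.

End TriangularSpan.

Lemma ex_maxn_prop (P : nat -> Prop) (N : nat) :
  P 0%N -> (forall k, P k -> (k <= N)%N) ->
  exists k, P k /\ forall k', P k' -> (k' <= k)%N.
Proof.
move=> P0 leN; pose Pb k := if excluded_middle_informative (P k) then true else false.
have PbP k : Pb k <-> P k by rewrite /Pb; case: excluded_middle_informative.
have exPb : exists k, Pb k by exists 0%N; apply/PbP.
have bndPb k : Pb k -> (k <= N)%N by move/PbP/leN.
case: (ex_maxnP exPb bndPb) => k /PbP Pk maxk; exists k; split=> // k' /PbP.
exact: maxk.
Qed.

Section FiniteLength.
Variables (R A : comUnitRingType) (f : {rmorphism R -> A}).
Hypothesis finite_length_A : finite_length_over f.

Definition strict_chain (C : (A -> Prop) -> Prop) (k : nat) (M : nat -> A -> Prop) :=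
  (forall i, (i <= k)%N -> C (M i)) /\
  (forall i, (i < k)%N -> (forall x, M i x -> M i.+1 x) /\ exists x, M i.+1 x /\ ~ M i x).

Lemma strict_chain_incl C k M :
  strict_chain C k M -> forall i, (i <= k)%N -> forall x, M 0%N x -> M i x.
Proof. by move=> [_ incM]; elim=> [|i IH] // ik x /(IH (ltnW ik)); apply: (incM i ik).1. Qed.

Lemma strict_chain_extend C k M (N : A -> Prop) :
  strict_chain C k M -> C N -> (forall x, M k x -> N x) -> (exists x, N x /\ ~ M k x) ->
  strict_chain C k.+1 (fun i => if (i <= k)%N then M i else N).
Proof.
move=> [CM incM] CN MN newN; split=> i ik; first by case: leqP => [/CM|].
rewrite (ik : (i <= k)%N); case: (ltnP i k) => [lt_ik|le_ki]; first exact: incM.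
by have -> : i = k by lia; rewrite ltnn.
Qed.

Lemma strict_chain_insert C k M j (N : A -> Prop) :
  strict_chain C k M -> (j < k)%N -> C N ->
  (forall x, M j x -> N x) -> (exists x, N x /\ ~ M j x) ->
  (forall x, N x -> M j.+1 x) -> (exists x, M j.+1 x /\ ~ N x) ->
  strict_chain C k.+1 (fun i => if (i <= j)%N then M i else if i == j.+1 then N else M i.-1).
Proof.
move=> [CM incM] jk CN MN newN NM newM; split=> i ik.
  by case: leqP => ij; [apply: CM; lia | case: eqP => _ //; apply: CM; lia].
case: (ltngtP i j) => [ij|ji|->]; last by rewrite eqxx.
  by apply: incM; lia.
rewrite eqSS (gtn_eqF ji); case: (eqVneq i j.+1) => [->|ne]; first by split.
by case: i ik ji ne => // i ik ji ne /=; apply: incM; lia.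
Qed.

(* A strict chain of maximal length admits neither an extension at the top
   nor a refinement. *)
Lemma saturated_chain (C : (A -> Prop) -> Prop) (M0 : A -> Prop) :
  (forall N, C N -> submodule f N) -> C M0 ->
  exists k M, [/\ strict_chain C k M, M 0%N = M0,
    (forall N, C N -> (forall x, M k x -> N x) -> forall x, N x -> M k x) &
    (forall j N, (j < k)%N -> C N -> (forall x, M j x -> N x) ->
       (forall x, N x -> M j.+1 x) ->
       (forall x, N x -> M j x) \/ (forall x, M j.+1 x -> N x))].
Proof.
move=> subC CM0; have [bnd lenbnd] := finite_length_A.
pose P k := exists M, strict_chain C k M /\ M 0%N = M0.
have P0 : P 0%N by exists (fun=> M0); split=> //; split=> // i; rewrite leqn0 => /eqP ->.
have leP k : P k -> (k <= bnd)%N.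
  by move=> [M [[CM incM] _]]; apply: (lenbnd k M) => // i /CM /subC.
have [k [[M [chM M_0]] maxk]] := ex_maxn_prop P0 leP.
exists k, M; split=> //.
  move=> N CN MN x Nx; apply: NNPP => NMx.
  have extP : P k.+1.
    exists (fun i => if (i <= k)%N then M i else N); split=> //.
    by apply: strict_chain_extend => //; exists x.
  by have := maxk _ extP; rewrite ltnn.
move=> j N jk CN MN NM.
have [[x1 [Nx1 NMx1]]|NnewN] := classic (exists x, N x /\ ~ M j x); last first.
  by left=> x Nx; apply: NNPP => NMx; apply: NnewN; exists x.
have [[x2 [Mx2 NNx2]]|NnewM] := classic (exists x, M j.+1 x /\ ~ N x); last first.
  by right=> x Mx; apply: NNPP => NNx; apply: NnewM; exists x.
have insP : P k.+1.
  exists (fun i => if (i <= j)%N then M i else if i == j.+1 then N else M i.-1).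
  by split=> //; apply: strict_chain_insert => //; [exists x1 | exists x2].
by have := maxk _ insP; rewrite ltnn.
Qed.

Lemma ideal_submodule (I : A -> Prop) : ideal I -> submodule f I.
Proof. by move=> [I0 [ID IM]]; split=> //; split=> // r x; apply: IM. Qed.

Lemma proper_ideal_sub_maximal (I : A -> Prop) :
  ideal I -> ~ I 1 -> exists J, maximal_ideal J /\ forall x, I x -> J x.
Proof.
move=> idI NI1; pose C (J : A -> Prop) := ideal J /\ ~ J 1.
have [k [M [chM M_0 topM _]]] :=
  @saturated_chain C I (fun J CJ => ideal_submodule CJ.1) (conj idI NI1).
have [CMk NMk1] := chM.1 k (leqnn k).
exists (M k); split; last by rewrite -M_0; apply: strict_chain_incl chM _ (leqnn k).
by split=> //; split=> // J idJ MJ NJ1; apply: topM.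
Qed.

Lemma nonunit_max_ideal (z : A) : z \isn't a GRing.unit -> max_ideal z.
Proof.
move=> Nz; pose I x := exists e, x = e * z.
have idI : ideal I.
  split; first by exists 0; rewrite mul0r.
  split=> [x y [e ->] [e' ->]|b x [e ->]]; first by exists (e + e'); rewrite mulrDl.
  by exists (b * e); rewrite mulrA.
have NI1 : ~ I 1.
  by move=> [e E]; case/negP: Nz; apply/unitrP; exists e; rewrite [z * e]mulrC -E.
have [J [maxJ IJ]] := proper_ideal_sub_maximal idI NI1.
by exists J; split=> //; apply: IJ; exists 1; rewrite mul1r.
Qed.

Hypothesis local_A : local_ring A.

Lemma unit_1B_max_ideal (y : A) : max_ideal y -> (1 - y) \is a GRing.unit.
Proof.
move=> my; apply: NNPP => /negP /nonunit_max_ideal m1y; apply: (@not_max_ideal1 A).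
by rewrite -(subrK y 1); apply: max_ideal_add.
Qed.

(* The chain of submodules [y ^+ i * A] stabilises: [y ^+ p = y ^+ p.+1 * e],
   and [1 - y * e] is a unit. *)
Lemma max_ideal_nilpotent (y : A) : max_ideal y -> exists p, y ^+ p = 0.
Proof.
move=> my; have [N lenN] := finite_length_A.
have [p [e Ep]] : exists p e, y ^+ p = y ^+ p.+1 * e.
  apply: NNPP => Nstab; suff: (N.+1 <= N)%N by rewrite ltnn.
  apply: (lenN N.+1 (fun i x => exists e, x = y ^+ (N.+1 - i) * e)).
    move=> i _; split; first by exists 0; rewrite mulr0.
    split=> [x x' [e ->] [e' ->]|r x [e ->]]; first by exists (e + e'); rewrite mulrDr.
    by exists (f r * e); rewrite mulrCA.
  move=> i iN; split=> [x [e ->]|].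
    by exists (y * e); rewrite subSS subSn // exprSr -mulrA.
  exists (y ^+ (N.+1 - i.+1)); split; first by exists 1; rewrite mulr1.
  move=> [e E]; apply: Nstab; exists (N.+1 - i.+1)%N, e.
  by rewrite -subSn // subSS in E *.
exists p; have U : (1 - y * e) \is a GRing.unit by apply/unit_1B_max_ideal/max_ideal_mulr.
by apply: (mulIr U); rewrite mulrBr mulr1 mulrA -exprSr -Ep subrr mul0r.
Qed.

End FiniteLength.

Lemma max_ideal_ideal (A : comUnitRingType) : local_ring A -> ideal (@max_ideal A).
Proof.
move=> local_A; split; first exact: max_ideal0.
by split=> [x y|b x]; [apply: max_ideal_add | apply: max_ideal_mull].
Qed.

Section CompositionSeries.
Variables (R A : comUnitRingType) (a : {rmorphism R -> A}).
Hypotheses (local_R : local_ring R) (local_A : local_ring A).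
Hypotheses (local_a : local_hom a) (finite_length_A : finite_length_over a).

Definition cyclic_ext (M : A -> Prop) (I : R -> Prop) (w y : A) :=
  exists x r, [/\ M x, I r & y = x + a r * w].

Lemma submodule_cyclic_ext M I w :
  submodule a M -> ideal I -> submodule a (cyclic_ext M I w).
Proof.
move=> [M0 [MD MZ]] [I0 [ID IM]]; split.
  by exists 0, 0; split=> //; rewrite rmorph0 mul0r addr0.
split=> [y y' [x [r [Mx Ir ->]]] [x' [r' [Mx' Ir' ->]]]|s y [x [r [Mx Ir ->]]]].
  by exists (x + x'), (r + r'); split; [apply: MD | apply: ID | rewrite rmorphD; ring].
by exists (a s * x), (s * r); split; [apply: MZ | apply: IM | rewrite rmorphM; ring].
Qed.

Lemma sub_cyclic_ext M I w : ideal I -> forall x, M x -> cyclic_ext M I w x.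
Proof. by move=> [I0 _] x Mx; exists x, 0; split=> //; rewrite rmorph0 mul0r addr0. Qed.

(* The alternative [N = M + m_R w] is excluded: it would put [w] in
   [M + a m ^+ p * A] for all [p], while [a m] is nilpotent. *)
Lemma simple_extension_generator (M N : A -> Prop) (w : A) :
  submodule a M -> submodule a N -> (forall x, M x -> N x) -> N w -> ~ M w ->
  (forall P, submodule a P -> (forall x, M x -> P x) -> (forall x, P x -> N x) ->
     (forall x, P x -> M x) \/ (forall x, N x -> P x)) ->
  (forall y, N y -> cyclic_ext M (fun=> True) w y) /\
  (forall m, max_ideal m -> M (a m * w)).
Proof.
move=> subM [_ [ND NZ]] MN Nw NMw saturated.
have idT : ideal (fun _ : R => True) by [].
have idm := max_ideal_ideal local_R.
have extN I y : cyclic_ext M I w y -> N y.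
  by move=> [x [r [Mx _ ->]]]; apply: ND (MN _ Mx) (NZ _ _ Nw).
split.
  have [|//] := saturated _ (submodule_cyclic_ext w subM idT)
    (@sub_cyclic_ext M _ w idT) (extN _).
  move/(_ w) => Mw; case: NMw; apply: Mw; exists 0, 1.
  by split=> //; [apply: subM.1 | rewrite rmorph1 mul1r add0r].
have [|] := saturated _ (submodule_cyclic_ext w subM idm)
  (@sub_cyclic_ext M _ w idm) (extN _).
  by move=> sub m mm; apply: sub; exists 0, m; rewrite add0r; split=> //; apply: subM.1.
move/(_ w Nw) => [x [m [Mx mm Ew]]]; exfalso; apply: NMw.
have [MD MZ] := subM.2.
have Ewp p : exists x', M x' /\ w = x' + a m ^+ p * w.
  elim: p => [|p [x' [Mx' E']]].
    by exists 0; rewrite expr0 mul1r add0r; split=> //; apply: subM.1.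
  exists (x' + a (m ^+ p) * x); split; first by apply: MD => //; apply: MZ.
  by rewrite {1}E' {1}Ew mulrDr addrA rmorphXn exprSr mulrA.
have [p nilp] := max_ideal_nilpotent finite_length_A local_A (local_a mm).
by have [x' [Mx' ->]] := Ewp p; rewrite nilp mul0r addr0.
Qed.

Lemma composition_series : exists k (M : nat -> A -> Prop) (w : nat -> A),
  [/\ forall x, M 0%N x -> x = 0, forall y, M k y &
    forall j, (j < k)%N ->
      (forall y, M j.+1 y -> cyclic_ext (M j) (fun=> True) (w j) y) /\
      (forall m, max_ideal m -> M j (a m * w j))].
Proof.
have sub0 : submodule a (fun x => x = 0).
  by split=> //; split=> [x y -> ->|r x ->]; rewrite ?addr0 ?mulr0.
have [k [M [[subM incM] M_0 topM refM]]] :=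
  @saturated_chain _ _ _ finite_length_A (submodule a) _ (fun _ sub => sub) sub0.
have Mfull y : M k y by apply: (topM (fun=> True)).
have step j : exists w, (j < k)%N ->
    (forall y, M j.+1 y -> cyclic_ext (M j) (fun=> True) w y) /\
    (forall m, max_ideal m -> M j (a m * w)).
  case: (ltnP j k) => jk; last by exists 0.
  have [MM [w [Mw NMw]]] := incM j jk.
  exists w => _; apply: simple_extension_generator => //; last by move=> P; apply: refM.
  - exact: subM (ltnW jk).
  - exact: subM jk.
have [w Hw] := choice _ step.
by exists k, M, w; split=> [x|//|j jk]; [rewrite M_0 | apply: Hw].
Qed.

End CompositionSeries.

Lemma finite_residue_ext_size (L1 L2 : comUnitRingType) (g : L1 -> L2) (s : seq L2) :
  (forall y, exists c : seq L1, max_ideal (y - \sum_(i < size s) g c`_i * s`_i)) ->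
  (0 < size s)%N.
Proof.
move=> span_s; rewrite lt0n; apply/negP => /eqP s0; have [cs] := span_s 1.
by move: (size s) s0 => d ->; rewrite big_ord0 subr0; apply: not_max_ideal1.
Qed.

(* If [s] spans the residue field extension and [w] generates a composition
   series, the products [s_i w_j], ordered by [j] first, form a triangular
   spanning family over [L1]. *)
Lemma finite_length_over_comp (L1 L2 A : comUnitRingType)
    (g : {rmorphism L1 -> L2}) (a : {rmorphism L2 -> A}) :
  local_ring L1 -> local_ring L2 -> local_ring A -> local_hom g -> local_hom a ->
  finite_residue_ext g -> finite_length_over a -> finite_length_over (a \o g).
Proof.
move=> local_L1 local_L2 local_A local_g local_a [s span_s] finite_length_A.
set D := size s; have D_gt0 : (0 < D)%N := finite_residue_ext_size span_s.
have [k [M [w [M_0 Mfull series]]]] :=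
  composition_series local_L2 local_A local_a finite_length_A.
pose u t := a s`_(t %% D) * w (t %/ D)%N.
have uE j i : (i < D)%N -> u (j * D + i)%N = a s`_i * w j.
  by move=> iD; rewrite /u modnMDl modn_small // divnMDl // divn_small // addn0.
have span_M j : (j <= k)%N -> forall y, M j y -> in_span (a \o g) u (j * D) y.
  elim: j => [|j IH] jk y; first by move/M_0 => ->; apply: in_span0.
  have [genM maxM] := series j jk.
  move/genM => [x [r [Mx _ ->]]].
  have [cs] := span_s r; set m := r - _ => mm.
  have -> : x + a r * w j =
      (x + a m * w j) + \sum_(i < D) (a \o g) cs`_i * u (j * D + i)%N.
    rewrite -(subrK (\sum_(i < D) g cs`_i * s`_i) r) -/m rmorphD mulrDl addrA.
    congr (_ + _); rewrite rmorph_sum mulr_suml; apply: eq_bigr => i _.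
    by rewrite uE // rmorphM /= mulrA.
  rewrite mulSn addnC; apply: in_span_cat.
  by apply: in_spanD; apply: IH (ltnW jk) _ _; [exact: Mx | exact: maxM].
apply: (@finite_length_of_triangular_span _ _ _ u (k * D) local_L1).
  by move=> y; apply: span_M (leqnn k) y (Mfull y).
move=> t m tK mm; have jk : (t %/ D < k)%N by rewrite ltn_divLR.
have -> : (a \o g) m * u t = a (g m * s`_(t %% D)) * w (t %/ D)%N.
  by rewrite /u rmorphM /= mulrA.
apply: in_span_widen (leq_trunc_div t D) _; apply: span_M (ltnW jk) _ _.
by apply: (series _ jk).2; apply/max_ideal_mulr/local_g.
Qed.

Definition pdobj_restrict (L1 L2 : comUnitRingType) (g : {rmorphism L1 -> L2})
    (local_L1 : local_ring L1) (local_L2 : local_ring L2) (local_g : local_hom g)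
    (res_g : finite_residue_ext g) (X : pdobj L2) : pdobj L1 :=
  @PDObj L1 (pd_car X) (pd_alg X \o g) (@pd_gam _ X) (pd_local X)
    (fun x mx => @pd_alg_local _ X _ (local_g x mx))
    (finite_length_over_comp local_L1 local_L2 (pd_local X) local_g
       (@pd_alg_local _ X) res_g (pd_length X))
    (pd_struct X).

Theorem mainTheorem8 (L L1 L2 : comUnitRingType)
  (f : {rmorphism L -> L1}) (g : {rmorphism L1 -> L2}) :
  local_ring L -> local_ring L1 -> local_ring L2 ->
  local_hom f -> local_hom g ->
  finite_residue_ext g ->
  slightly_ramified (g \o f) ->
  slightly_ramified f.
Proof.
move=> _ local_L1 local_L2 _ local_g res_g inj_gf x y Exy; apply: inj_gf.
apply: subset_eq_compat; apply: functional_extensionality_dep => X.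
exact: (f_equal (fun z => proj1_sig z (pdobj_restrict local_L1 local_L2 local_g res_g X)) Exy).
Qed.
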